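(* Let $M>1$ and let $Q$ be an indefinite ternary quadratic form of Diophantine type $M$ with $\det Q=1$. Then there exists $0<\eta<1$ such that for every $R>10$ the set $\{v\in\Delta_Q\cap\mathcal{H}_{\eta,M}: R\le\|v\|<R^2\}$ is contained in the union of at most $12$ lines through the origin.
   Context: $\|\cdot\|$ is the supremum norm on $\mathbb{R}^3$; for quadratic forms $\|Q\|$ is the maximal absolute value of coefficients. $Q_0(v)=v_2^2-2v_1v_3$. Fix $g\in\mathrm{SL}_3(\mathbb{R})$ with $Q(v)=Q_0(gv)$ for all $v$ and set $\Delta_Q=g\mathbb{Z}^3$. $Q$ is of Diophantine type $M$ if there is $c>0$ with $\|Q-\rho Q'\|>c\|Q'\|^{-M}$ for every nonzero integral ternary quadratic form $Q'$, $\rho=(\det Q')^{-1/3}$. $\mathcal{H}_{\eta,M}=\{v\in\mathbb{R}^3:|Q_0(v)|<\eta\|v\|^{-50M}\}$. *)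

From HB Require Import structures.
From mathcomp Require Import all_boot all_order all_algebra.
From mathcomp Require Import all_classical all_reals all_analysis.
Set Implicit Arguments. Unset Strict Implicit. Unset Printing Implicit Defensive.
Import Order.TTheory GRing.Theory Num.Theory.
Local Open Scope ring_scope.

(* Ternary quadratic forms are represented by their symmetric Gram matrix S:
   Q(v) = v^T S v, for v a column vector in R^3 (indices 0,1,2 = v_1,v_2,v_3). *)
Definition qf (R : realType) (S : 'M[R]_3) (v : 'cV[R]_3) : R := (v^T *m S *m v) 0 0.

(* Gram matrix of Q_0(v) = v_2^2 - 2 v_1 v_3. *)
Definition S0 (R : realType) : 'M[R]_3 :=
  \matrix_(i < 3, j < 3)
    (if (i == 1 :> nat) && (j == 1 :> nat) then 1
     else if ((i == 0 :> nat) && (j == 2 :> nat)) || ((i == 2 :> nat) && (j == 0 :> nat))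
          then -1 else 0).

(* Coefficient of v_i v_j (i <= j) in the polynomial Q(v) = v^T S v. *)
Definition qcoef (R : realType) (S : 'M[R]_3) (i j : 'I_3) : R :=
  if i == j then S i i else S i j + S j i.

Definition qnorm (R : realType) (S : 'M[R]_3) : R :=
  \big[Num.max/0]_(i < 3) \big[Num.max/0]_(j < 3 | (i <= j)%N) `|qcoef S i j|.

Definition integral_form (R : realType) (S : 'M[R]_3) : Prop :=
  S^T = S /\ forall i j : 'I_3, (i <= j)%N -> exists z : int, qcoef S i j = z%:~R.

(* Determinant of a form, normalized so that det Q_0 = 1. *)
Definition qdet (R : realType) (S : 'M[R]_3) : R := - \det S.

Definition cbrt (R : realType) (x : R) : R :=
  if 0 <= x then powR x (3^-1) else - powR (- x) (3^-1).

Definition diophantine_type (R : realType) (M : R) (S : 'M[R]_3) : Prop :=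
  exists2 c : R, 0 < c &
    forall S' : 'M[R]_3, integral_form S' -> S' != 0 -> qdet S' != 0 ->
      qnorm (S - (cbrt (qdet S'))^-1 *: S') > c * powR (qnorm S') (- M).

Definition vnorm (R : realType) (v : 'cV[R]_3) : R :=
  \big[Num.max/0]_(i < 3) `|v i 0|.

(* Delta_Q = g Z^3 *)
Definition in_lattice (R : realType) (g : 'M[R]_3) (v : 'cV[R]_3) : Prop :=
  exists w : 'cV[int]_3, v = g *m map_mx (fun z : int => z%:~R) w.

Definition in_H (R : realType) (eta M : R) (v : 'cV[R]_3) : Prop :=
  `|qf (S0 R) v| < eta * powR (vnorm v) (- (50 * M)).

(** In the coordinates [w = g^-1 v], a vector of [Delta_Q] in [H_{eta,M}] with
    [R <= |v| < R^2] becomes an integral vector [w] with [|w| <= W ~ R^2] and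
    [|Q w| <= eps = eta R^(-50 M)].  It suffices to show that no five such
    vectors are pairwise non-proportional: a maximal family of pairwise
    non-proportional ones then has at most four members and its lines cover
    everything.

    If three of the five are coplanar, an integral relation between them makes
    the bilinear form [B x y] of two of them tiny, so the Gram matrix of
    [x], [y], [x × y] has a tiny upper-left block although its determinant is
    [- |x × y|^4 <= -1].  Otherwise [w1], [w2], [w3] form a basis in which the
    Gram matrix [N] of [Q] has a tiny diagonal; [Q w4 ~ 0] and [Q w5 ~ 0] say
    that the off-diagonal part of [N] is almost orthogonal to two integral
    vectors [a], [b], hence close to a multiple of [a × b].  This yields an
    integral form [Q'] of height polynomial in [W] with [Q - mu Q'] of size
    [W^O(1) eps]; normalizing [mu] by the cube root of [det Q'] contradicts
    the Diophantine type of [Q] once [eta] is small. *)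

From mathcomp Require Import all_boot all_order all_algebra.
From mathcomp Require Import all_classical all_reals all_analysis.
From mathcomp Require Import ring lra.
Import Order.TTheory GRing.Theory Num.Theory.
Set Implicit Arguments. Unset Strict Implicit. Unset Printing Implicit Defensive.
Local Open Scope ring_scope.

Lemma ord3P (i : 'I_3) : [\/ i = 0, i = 1 | i = 2].
Proof.
case: i => [[|[|[|//]]]] Hi; [constructor 1|constructor 2|constructor 3]; exact/val_inj.
Qed.

Lemma sum_ord3 (V : nmodType) (f : 'I_3 -> V) : \sum_(i < 3) f i = f 0 + f 1 + f 2.
Proof.
rewrite !big_ord_recl big_ord0 addr0 addrA; congr (_ + f _ + f _); exact/val_inj.
Qed.

Lemma col3P (T : Type) (x y : 'cV[T]_3) :
  x 0 0 = y 0 0 -> x 1 0 = y 1 0 -> x 2 0 = y 2 0 -> x = y.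
Proof.
move=> h0 h1 h2; apply/matrixP => i j; rewrite (ord1 j).
by case: (ord3P i) => ->.
Qed.

Section ThreeByThree.
Variable R : comPzRingType.
Implicit Types (a b c p u v : 'cV[R]_3) (A S : 'M[R]_3).

Lemma det_mx33 A : \det A =
  A 0 0 * A 1 1 * A 2 2 - A 0 0 * A 1 2 * A 2 1 - A 0 1 * A 1 0 * A 2 2
  + A 0 1 * A 1 2 * A 2 0 + A 0 2 * A 1 0 * A 2 1 - A 0 2 * A 1 1 * A 2 0.
Proof.
rewrite (expand_det_row _ 0) sum_ord3 /cofactor.
rewrite !(expand_det_row _ 0) !big_ord_recl !big_ord0 /cofactor.
rewrite !det_mx11 !mxE /=.
pose a i j := A (inord i) (inord j).
have E i j : A i j = a i j by rewrite /a !inord_val.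
rewrite !E /= /bump /=; ring.
Qed.

Definition dot u v : R := u 0 0 * v 0 0 + u 1 0 * v 1 0 + u 2 0 * v 2 0.

Definition cross a b : 'cV[R]_3 :=
  \col_(i < 3) (if i == 0 :> nat then a 1 0 * b 2 0 - a 2 0 * b 1 0
                else if i == 1 :> nat then a 2 0 * b 0 0 - a 0 0 * b 2 0
                else a 0 0 * b 1 0 - a 1 0 * b 0 0).

Lemma crossE0 a b : cross a b 0 0 = a 1 0 * b 2 0 - a 2 0 * b 1 0.
Proof. by rewrite mxE. Qed.
Lemma crossE1 a b : cross a b 1 0 = a 2 0 * b 0 0 - a 0 0 * b 2 0.
Proof. by rewrite mxE. Qed.
Lemma crossE2 a b : cross a b 2 0 = a 0 0 * b 1 0 - a 1 0 * b 0 0.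
Proof. by rewrite mxE. Qed.

Definition triple a b c : R := dot a (cross b c).

Lemma tripleE a b c : triple a b c =
  a 0 0 * (b 1 0 * c 2 0 - b 2 0 * c 1 0) + a 1 0 * (b 2 0 * c 0 0 - b 0 0 * c 2 0)
  + a 2 0 * (b 0 0 * c 1 0 - b 1 0 * c 0 0).
Proof. by rewrite /triple /dot crossE0 crossE1 crossE2. Qed.

Lemma triple_cross_self a b : triple a b (cross a b) = dot (cross a b) (cross a b).
Proof. rewrite tripleE /dot !crossE0 !crossE1 !crossE2; ring. Qed.

Lemma dotv0 u : dot u 0 = 0.
Proof. by rewrite /dot !mxE !mulr0 !addr0. Qed.

Lemma triple_neq0_cross a b c :
  triple a b c != 0 -> [/\ cross a b != 0, cross a c != 0 & cross b c != 0].
Proof.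
have e1 : triple a b c = dot c (cross a b).
  by rewrite tripleE /dot !crossE0 !crossE1 !crossE2; ring.
have e2 : triple a b c = - dot b (cross a c).
  by rewrite tripleE /dot !crossE0 !crossE1 !crossE2; ring.
move=> h; split; apply: contraNneq h => h0.
- by rewrite e1 h0 dotv0.
- by rewrite e2 h0 dotv0 oppr0.
- by rewrite /triple h0 dotv0.
Qed.

Lemma cross_crossl a b c : cross (cross a b) c = dot a c *: b - dot b c *: a.
Proof. apply: col3P; rewrite !mxE /= /dot; ring. Qed.

Lemma cross_crossr a b c : cross a (cross b c) = dot a c *: b - dot a b *: c.
Proof. apply: col3P; rewrite !mxE /= /dot; ring. Qed.

Lemma dot_cross_expand a b c :
  dot (cross a b) (cross a b) *: c =
  dot (cross c b) (cross a b) *: a + dot (cross a c) (cross a b) *: b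
  + triple a b c *: cross a b.
Proof. apply: col3P; rewrite /dot tripleE !mxE /=; ring. Qed.

Definition col3mx a b c : 'M[R]_3 :=
  \matrix_(i < 3, j < 3)
    (if j == 0 :> nat then a i 0 else if j == 1 :> nat then b i 0 else c i 0).

Definition adj3 a b c : 'M[R]_3 :=
  \matrix_(i < 3, j < 3)
    (if i == 0 :> nat then cross b c j 0 else if i == 1 :> nat then cross c a j 0
     else cross a b j 0).

Lemma col_col3mx0 a b c : col 0 (col3mx a b c) = a.
Proof. by apply/matrixP => i j; rewrite (ord1 j) !mxE. Qed.
Lemma col_col3mx1 a b c : col 1 (col3mx a b c) = b.
Proof. by apply/matrixP => i j; rewrite (ord1 j) !mxE. Qed.
Lemma col_col3mx2 a b c : col 2 (col3mx a b c) = c.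
Proof. by apply/matrixP => i j; rewrite (ord1 j) !mxE. Qed.

Lemma det_col3mx a b c : \det (col3mx a b c) = triple a b c.
Proof. rewrite det_mx33 !mxE /= tripleE; ring. Qed.

Lemma mul_col3mx a b c p :
  col3mx a b c *m p = p 0 0 *: a + p 1 0 *: b + p 2 0 *: c.
Proof. by apply: col3P; rewrite !mxE sum_ord3 !mxE /=; ring. Qed.

Lemma mul_col3mx_adj a b c : col3mx a b c *m adj3 a b c = (triple a b c)%:M.
Proof.
apply/matrixP => i j; rewrite !mxE sum_ord3 !mxE /= tripleE.
by case: (ord3P i) => ->; case: (ord3P j) => -> /=; rewrite ?mxE /=; ring.
Qed.

Lemma col3mx_adjK a b c p :
  triple a b c *: p = col3mx a b c *m (adj3 a b c *m p).
Proof. by rewrite mulmxA mul_col3mx_adj mul_scalar_mx. Qed.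

Lemma adj3_conj a b c S :
  (adj3 a b c)^T *m ((col3mx a b c)^T *m S *m col3mx a b c) *m adj3 a b c
  = triple a b c ^+ 2 *: S.
Proof.
set B := col3mx a b c; set C := adj3 a b c.
have -> : C^T *m (B^T *m S *m B) *m C = (B *m C)^T *m S *m (B *m C).
  by rewrite trmx_mul !mulmxA.
by rewrite mul_col3mx_adj tr_scalar_mx mul_scalar_mx mul_mx_scalar scalerA expr2.
Qed.

Definition pairprod p : 'cV[R]_3 :=
  \col_(i < 3) (if i == 0 :> nat then p 0 0 * p 1 0
                else if i == 1 :> nat then p 0 0 * p 2 0 else p 1 0 * p 2 0).

Definition offdiag A : 'cV[R]_3 :=
  \col_(i < 3) (if i == 0 :> nat then A 0 1 else if i == 1 :> nat then A 0 2 else A 1 2).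

Definition offdiag_mx c : 'M[R]_3 :=
  \matrix_(i < 3, j < 3) (if i == j then 0 else if (i + j == 1)%N then c 0 0
     else if (i + j == 2)%N then c 1 0 else c 2 0).

Lemma offdiag_mx_sym c : (offdiag_mx c)^T = offdiag_mx c.
Proof. by apply/matrixP => i j; rewrite !mxE eq_sym addnC. Qed.

Definition proportional u v := exists t : R, u = t *: v.

End ThreeByThree.

Section Proportionality.
Variable F : fieldType.
Implicit Types (a b p q v w : 'cV[F]_3).

Lemma proportional_scale (k a : F) w v : k != 0 -> k *: w = a *: v -> proportional w v.
Proof. by move=> hk h; exists (k^-1 * a); rewrite -scalerA -h scalerA mulVf ?scale1r. Qed.

Lemma cross_eq0_proportional a b : cross a b = 0 -> b != 0 -> proportional a b.
Proof.
move=> h hb; have c i : cross a b i 0 = 0 by rewrite h mxE.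
move: (c 0) (c 1) (c 2); rewrite crossE0 crossE1 crossE2.
move=> /subr0_eq h0 /subr0_eq h1 /subr0_eq h2.
have e k l : a k 0 * b l 0 = a l 0 * b k 0.
  by case: (ord3P k) => ->; case: (ord3P l) => ->; rewrite ?h0 ?h1 ?h2.
have /existsP [i bi] : [exists i : 'I_3, b i 0 != 0].
  rewrite -negb_forall; apply: contra hb => /forallP b0.
  by apply/eqP/matrixP => i j; rewrite (ord1 j) mxE; apply/eqP/b0.
exists (a i 0 / b i 0); apply/matrixP => k l; rewrite (ord1 l) !mxE.
by apply: (mulIf bi); rewrite mulrAC divfK // e.
Qed.

Lemma pairprod_cross_eq0_proportional p q :
  p 0 0 != 0 -> p 1 0 != 0 -> p 2 0 != 0 -> q 0 0 != 0 -> q 2 0 != 0 ->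
  cross (pairprod p) (pairprod q) = 0 -> proportional q p.
Proof.
move=> p0 p1 p2 q0 q2 h.
have c i : cross (pairprod p) (pairprod q) i 0 = 0 by rewrite h mxE.
move: (c 0) (c 2); rewrite crossE0 crossE2 !mxE /= => c0 c2.
have e1 : p 0 0 * q 1 0 = p 1 0 * q 0 0.
  apply/subr0_eq/(mulIf (mulf_neq0 p2 q2)); rewrite mul0r -c0; ring.
have e2 : p 1 0 * q 2 0 = p 2 0 * q 1 0.
  apply/subr0_eq/(mulIf (mulf_neq0 p0 q0)); rewrite mul0r -c2; ring.
exists (q 0 0 / p 0 0); apply: col3P; rewrite !mxE.
- by rewrite divfK.
- by apply: (mulIf p0); rewrite mulrAC divfK // mulrC e1 mulrC.
- apply: (mulIf p0); rewrite mulrAC divfK //; apply: (mulIf p1).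
  transitivity (p 0 0 * (p 1 0 * q 2 0)); first by ring.
  rewrite e2; transitivity (p 2 0 * (p 0 0 * q 1 0)); first by ring.
  by rewrite e1; ring.
Qed.

End Proportionality.

Section QuadraticForms.
Variable R : realType.
Implicit Types (p x y : 'cV[R]_3) (B N S : 'M[R]_3).

Definition bil S x y : R := (x^T *m S *m y) 0 0.

Lemma bilE S x y : bil S x y =
  x 0 0 * (S 0 0 * y 0 0 + S 0 1 * y 1 0 + S 0 2 * y 2 0) +
  x 1 0 * (S 1 0 * y 0 0 + S 1 1 * y 1 0 + S 1 2 * y 2 0) +
  x 2 0 * (S 2 0 * y 0 0 + S 2 1 * y 1 0 + S 2 2 * y 2 0).
Proof. rewrite /bil !mxE !sum_ord3 !mxE !sum_ord3 !mxE; ring. Qed.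

Lemma sym_mxE S i j : S^T = S -> S j i = S i j.
Proof. by move=> h; rewrite -[in RHS]h mxE. Qed.

Lemma bil_sym S x y : S^T = S -> bil S x y = bil S y x.
Proof. move=> h; rewrite !bilE (sym_mxE 1 0 h) (sym_mxE 2 0 h) (sym_mxE 2 1 h); ring. Qed.

Lemma qf_mulmx S B p : qf S (B *m p) = qf (B^T *m S *m B) p.
Proof. by rewrite /qf trmx_mul !mulmxA. Qed.

Lemma gram_mxE S B i j : (B^T *m S *m B) i j = bil S (col i B) (col j B).
Proof.
rewrite /bil !mxE; apply: eq_bigr => k _; rewrite !mxE; congr (_ * _).
by apply: eq_bigr => l _; rewrite !mxE.
Qed.

Lemma gram_sym S B : S^T = S -> (B^T *m S *m B)^T = B^T *m S *m B.
Proof. by move=> h; rewrite !trmx_mul trmxK h mulmxA. Qed.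

Lemma qfZ S (k : R) x : qf S (k *: x) = k ^+ 2 * qf S x.
Proof. rewrite ![qf _ _]bilE !mxE; ring. Qed.

Lemma qf_comb S (a b : R) x y : S^T = S ->
  qf S (a *: x + b *: y) = a ^+ 2 * qf S x + b ^+ 2 * qf S y + 2 * a * b * bil S x y.
Proof.
move=> h; rewrite ![qf _ _]bilE !bilE !mxE (sym_mxE 1 0 h) (sym_mxE 2 0 h) (sym_mxE 2 1 h).
ring.
Qed.

Lemma qf_sym_expand N p : N^T = N ->
  qf N p = p 0 0 ^+ 2 * N 0 0 + p 1 0 ^+ 2 * N 1 1 + p 2 0 ^+ 2 * N 2 2
           + 2 * dot (pairprod p) (offdiag N).
Proof.
move=> h; rewrite [qf _ _]bilE /dot !mxE /=.
rewrite (sym_mxE 1 0 h) (sym_mxE 2 0 h) (sym_mxE 2 1 h); ring.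
Qed.

End QuadraticForms.

Section Integrality.
Variable R : archiRealDomainType.
Implicit Types (a b c u v : 'cV[R]_3).

Definition int_col (v : 'cV[R]_3) := forall i, v i 0 \is a Num.int.
Definition int_mx (A : 'M[R]_3) := forall i j, A i j \is a Num.int.

Lemma int_mulmx m n p (A : 'M[R]_(m, n)) (B : 'M[R]_(n, p)) :
  (forall i j, A i j \is a Num.int) -> (forall i j, B i j \is a Num.int) ->
  forall i j, (A *m B) i j \is a Num.int.
Proof. by move=> hA hB i j; rewrite mxE rpred_sum // => k _; rewrite rpredM. Qed.

Lemma int_mulmx_col (A : 'M[R]_3) v : int_mx A -> int_col v -> int_col (A *m v).
Proof. by move=> hA hv i; apply: int_mulmx => // k l; rewrite (ord1 l). Qed.

Lemma int_dot u v : int_col u -> int_col v -> dot u v \is a Num.int.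
Proof. by move=> hu hv; rewrite /dot !(rpredD, rpredM) ?hu ?hv. Qed.

Lemma int_cross a b : int_col a -> int_col b -> int_col (cross a b).
Proof.
move=> ha hb i; case: (ord3P i) => ->;
  by rewrite ?crossE0 ?crossE1 ?crossE2 rpredB ?rpredM ?ha ?hb.
Qed.

Lemma int_triple a b c : int_col a -> int_col b -> int_col c -> triple a b c \is a Num.int.
Proof. by move=> ha hb hc; apply: int_dot => //; apply: int_cross. Qed.

Lemma int_adj3 a b c : int_col a -> int_col b -> int_col c -> int_mx (adj3 a b c).
Proof.
move=> ha hb hc i j; rewrite mxE.
by case: ifP => _; [|case: ifP => _]; apply: int_cross.
Qed.

Lemma dot_self_ge1 v : int_col v -> v != 0 -> 1 <= dot v v.
Proof.
move=> hv; apply: contra_neqT; rewrite -ltNge /dot -!expr2 => hlt.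
have s0 := sqr_ge0 (v 0 0); have s1 := sqr_ge0 (v 1 0); have s2 := sqr_ge0 (v 2 0).
have zero i : v i 0 = 0.
  apply: contraTeq hlt => /(sqr_intr_ge1 (hv i)) hi; rewrite -leNgt.
  by case: (ord3P i) hi => ->; lra.
by apply: col3P; rewrite !zero mxE.
Qed.

End Integrality.

Section EntryBounds.
Variable R : realFieldType.
Implicit Types (a b c : 'cV[R]_3) (X Y : 'M[R]_3).

Lemma ler_norm_mul (x y a b : R) : `|x| <= a -> `|y| <= b -> `|x * y| <= a * b.
Proof. by move=> ha hb; rewrite normrM ler_pM. Qed.

Lemma ler_norm_mul3 (x y z a b c : R) :
  `|x| <= a -> `|y| <= b -> `|z| <= c -> `|x * y * z| <= a * b * c.
Proof. by move=> ha hb hc; do 2 apply: ler_norm_mul => //. Qed.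

Lemma ler_norm_sub (x y a b : R) : `|x| <= a -> `|y| <= b -> `|x - y| <= a + b.
Proof. by move=> ha hb; apply: le_trans (ler_normB _ _) _; apply: lerD. Qed.

Lemma ler_norm_add3 (x y z a b c : R) :
  `|x| <= a -> `|y| <= b -> `|z| <= c -> `|x + y + z| <= a + b + c.
Proof.
move=> ha hb hc; apply: le_trans (ler_normD _ _) _; apply: lerD => //.
by apply: le_trans (ler_normD _ _) _; apply: lerD.
Qed.

Lemma ler_norm_det_terms (t1 t2 t3 t4 t5 t6 b1 b2 b3 b4 b5 b6 : R) :
  `|t1| <= b1 -> `|t2| <= b2 -> `|t3| <= b3 -> `|t4| <= b4 -> `|t5| <= b5 -> `|t6| <= b6 ->
  `|t1 - t2 - t3 + t4 + t5 - t6| <= b1 + b2 + b3 + b4 + b5 + b6.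
Proof.
move=> h1 h2 h3 h4 h5 h6.
do 5 (apply: le_trans (ler_normD _ _) _ || apply: le_trans (ler_normB _ _) _;
  rewrite ?normrN; apply: lerD => //).
Qed.

Lemma mulmx_entry_le m n p (A : 'M[R]_(m, n)) (B : 'M[R]_(n, p)) (a b : R) :
  (forall i j, `|A i j| <= a) -> (forall i j, `|B i j| <= b) ->
  forall i j, `|(A *m B) i j| <= n%:R * (a * b).
Proof.
move=> hA hB i j; rewrite mxE; apply: le_trans (ler_norm_sum _ _ _) _.
apply: le_trans (ler_sum _ (fun k _ => ler_norm_mul (hA i k) (hB k j))) _.
by rewrite sumr_const card_ord mulr_natl.
Qed.

Lemma gram_entry_le X Y (x y : R) :
  (forall i j, `|X i j| <= x) -> (forall i j, `|Y i j| <= y) ->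
  forall i j, `|(X^T *m Y *m X) i j| <= 9 * (x ^+ 2 * y).
Proof.
move=> hX hY i j.
have hXT i' j' : `|X^T i' j'| <= x by rewrite mxE.
rewrite (_ : 9 * _ = 3%:R * (3%:R * (x * y) * x)); last by ring.
exact: mulmx_entry_le (mulmx_entry_le hXT hY) hX i j.
Qed.

Lemma dot_le a b (m n : R) :
  (forall i, `|a i 0| <= m) -> (forall i, `|b i 0| <= n) -> `|dot a b| <= 3 * (m * n).
Proof.
move=> ha hb; rewrite (_ : 3 * _ = m * n + m * n + m * n); last by ring.
by apply: ler_norm_add3; apply: ler_norm_mul.
Qed.

Lemma cross_le a b (m : R) :
  (forall i, `|a i 0| <= m) -> (forall i, `|b i 0| <= m) ->
  forall i, `|cross a b i 0| <= 2 * m ^+ 2.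
Proof.
move=> ha hb i; rewrite (_ : 2 * _ = m * m + m * m); last by ring.
by case: (ord3P i) => ->; rewrite ?crossE0 ?crossE1 ?crossE2;
  apply: ler_norm_sub; apply: ler_norm_mul.
Qed.

Lemma triple_le a b c (m : R) :
  (forall i, `|a i 0| <= m) -> (forall i, `|b i 0| <= m) -> (forall i, `|c i 0| <= m) ->
  `|triple a b c| <= 6 * m ^+ 3.
Proof.
move=> ha hb hc; rewrite (_ : 6 * _ = 3 * (m * (2 * m ^+ 2))); last by ring.
exact: dot_le ha (cross_le hb hc).
Qed.

Lemma adj3_entry_le a b c (m : R) :
  (forall i, `|a i 0| <= m) -> (forall i, `|b i 0| <= m) -> (forall i, `|c i 0| <= m) ->
  forall i j, `|adj3 a b c i j| <= 2 * m ^+ 2.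
Proof.
move=> ha hb hc i j; rewrite mxE.
by case: ifP => _; [|case: ifP => _]; exact: cross_le.
Qed.

Lemma det_le_of_small_block X (s m : R) :
  (forall i j, `|X i j| <= m) -> `|X 0 0| <= s -> `|X 1 1| <= s -> `|X 0 1| <= s ->
  `|X 1 0| <= s -> `|\det X| <= 6 * (s * m ^+ 2).
Proof.
move=> hm h00 h11 h01 h10; rewrite det_mx33.
rewrite (_ : 6 * _ = s * m * m + s * m * m + s * m * m + s * m * m + m * s * m + m * s * m);
  last by ring.
exact: (ler_norm_det_terms (ler_norm_mul3 h00 (hm _ _) (hm _ _))
  (ler_norm_mul3 h00 (hm _ _) (hm _ _)) (ler_norm_mul3 h01 (hm _ _) (hm _ _))
  (ler_norm_mul3 h01 (hm _ _) (hm _ _)) (ler_norm_mul3 (hm _ _) h10 (hm _ _))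
  (ler_norm_mul3 (hm _ _) h11 (hm _ _))).
Qed.

Lemma ler_norm_mul3_sub (x1 x2 x3 y1 y2 y3 m d : R) :
  `|x1| <= m -> `|x2| <= m -> `|x3| <= m -> `|y1| <= m -> `|y2| <= m -> `|y3| <= m ->
  `|x1 - y1| <= d -> `|x2 - y2| <= d -> `|x3 - y3| <= d ->
  `|x1 * x2 * x3 - y1 * y2 * y3| <= 3 * (m ^+ 2 * d).
Proof.
move=> h1 h2 h3 k1 k2 k3 d1 d2 d3.
have -> : x1 * x2 * x3 - y1 * y2 * y3
   = (x1 - y1) * x2 * x3 + y1 * (x2 - y2) * x3 + y1 * y2 * (x3 - y3) by ring.
rewrite (_ : 3 * _ = d * m * m + m * d * m + m * m * d); last by ring.
by apply: ler_norm_add3; apply: ler_norm_mul3.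
Qed.

Lemma det_lipschitz X Y (m d : R) :
  (forall i j, `|X i j| <= m) -> (forall i j, `|Y i j| <= m) ->
  (forall i j, `|X i j - Y i j| <= d) -> `|\det X - \det Y| <= 18 * (m ^+ 2 * d).
Proof.
move=> hX hY hd; rewrite !det_mx33.
pose t (a b c e f g : 'I_3) := ler_norm_mul3_sub (hX a b) (hX c e) (hX f g) (hY a b) (hY c e)
  (hY f g) (hd a b) (hd c e) (hd f g).
have := ler_norm_det_terms (t 0 0 1 1 2 2) (t 0 0 1 2 2 1) (t 0 1 1 0 2 2)
  (t 0 1 1 2 2 0) (t 0 2 1 0 2 1) (t 0 2 1 1 2 0).
rewrite (_ : 18 * _ = 3 * (m ^+ 2 * d) *+ 6); last by ring.
by congr (`| _ | <= _); ring.
Qed.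

End EntryBounds.

Section NearMultiple.
Variable R : rcfType.
Implicit Types (a b c x : 'cV[R]_3).

Lemma dot_self_ge0 c : 0 <= dot c c.
Proof. by rewrite /dot -!expr2 !addr_ge0 ?sqr_ge0. Qed.

Lemma col_le_sqrt_dot c i : `|c i 0| <= Num.sqrt (dot c c).
Proof.
rewrite -sqrtr_sqr ler_wsqrtr // /dot -!expr2.
have := sqr_ge0 (c 0 0); have := sqr_ge0 (c 1 0); have := sqr_ge0 (c 2 0).
by case: (ord3P i) => -> /=; lra.
Qed.

Lemma sqrt_dot_le c : Num.sqrt (dot c c) <= `|c 0 0| + `|c 1 0| + `|c 2 0|.
Proof.
rewrite -(@ler_pXn2r _ 2) ?nnegrE ?sqrtr_ge0 ?addr_ge0 // sqr_sqrtr ?dot_self_ge0 //.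
rewrite /dot -!expr2 -[c 0 0 ^+ 2]real_normK ?num_real // -[c 1 0 ^+ 2]real_normK ?num_real //.
rewrite -[c 2 0 ^+ 2]real_normK ?num_real //.
have := normr_ge0 (c 0 0); have := normr_ge0 (c 1 0); have := normr_ge0 (c 2 0).
nra.
Qed.

(** With [c = a × b]: [|c|^2 x - (c.x) c = - c × (c × x)], and
    [c × x = (a.x) b - (b.x) a] is small. *)
Lemma near_cross_multiple a b x (m G : R) :
  let c := cross a b in
  1 <= dot c c -> (forall k, `|a k 0| <= m) -> (forall k, `|b k 0| <= m) ->
  `|dot a x| <= G -> `|dot b x| <= G ->
  forall k, Num.sqrt (dot c c) * `|x k 0 - dot c x / dot c c * c k 0| <= 4 * (m * G).
Proof.
move=> c hC ha hb hax hbx k.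
set sig := Num.sqrt (dot c c).
have sig0 : 0 <= sig by apply: sqrtr_ge0.
have sig2 : sig ^+ 2 = dot c c by rewrite sqr_sqrtr ?dot_self_ge0.
have hc i : `|c i 0| <= sig by apply: col_le_sqrt_dot.
set y := cross c x.
have hy i : `|y i 0| <= 2 * (m * G).
  rewrite /y /c cross_crossl !mxE (_ : 2 * _ = G * m + G * m); last by ring.
  by apply: ler_norm_sub; apply: ler_norm_mul.
have C0 : dot c c != 0 by rewrite gt_eqF // (lt_le_trans ltr01 hC).
have he : dot c c * (x k 0 - dot c x / dot c c * c k 0) = - cross c y k 0.
  by rewrite /y cross_crossr !mxE; field.
clearbody y c.
have hcy : `|cross c y k 0| <= 2 * sig * (2 * (m * G)).
  rewrite (_ : 2 * sig * _ = sig * (2 * (m * G)) + sig * (2 * (m * G))); last by ring.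
  by case: (ord3P k) => ->; rewrite ?crossE0 ?crossE1 ?crossE2;
    apply: ler_norm_sub; apply: ler_norm_mul; rewrite ?hc ?hy.
move: hcy; rewrite -normrN -he normrM ger0_norm ?dot_self_ge0 // -sig2 => h.
have := normr_ge0 (x k 0 - dot c x / dot c c * c k 0).
nra.
Qed.

End NearMultiple.

Section SmallVectors.
Variable R : realType.
Implicit Types (S : 'M[R]_3) (w x y : 'cV[R]_3).

Definition almost_isotropic S (W eps : R) w :=
  [/\ int_col w, forall i, `|w i 0| <= W & `|qf S w| <= eps].

Lemma bil_small_of_comb S x y w (k a b K eps : R) :
  S^T = S -> a \is a Num.int -> b \is a Num.int -> a != 0 -> b != 0 ->
  `|k| <= K -> `|a| <= K -> `|b| <= K -> k *: w = a *: x + b *: y ->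
  `|qf S x| <= eps -> `|qf S y| <= eps -> `|qf S w| <= eps ->
  2 * `|bil S x y| <= 3 * (K ^+ 2 * eps).
Proof.
move=> hS ai bi a0 b0 hk ha hb hw qx qy qw.
have sq (z : R) : `|z| <= K -> `|z ^+ 2| <= K * K by move=> hz; rewrite expr2 ler_norm_mul.
have e : 2 * a * b * bil S x y = k ^+ 2 * qf S w - a ^+ 2 * qf S x - b ^+ 2 * qf S y.
  by rewrite -qfZ hw qf_comb //; ring.
have : `|2 * a * b * bil S x y| <= 3 * (K ^+ 2 * eps).
  rewrite e (_ : 3 * _ = K * K * eps + K * K * eps + K * K * eps); last by ring.
  by apply: ler_norm_sub; [apply: ler_norm_sub|]; apply: ler_norm_mul => //; apply: sq.
rewrite !normrM normr_nat => h.
have hab : 1 <= `|a| * `|b|.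
  by have := norm_intr_ge1 ai a0; have := norm_intr_ge1 bi b0; nra.
have := normr_ge0 (bil S x y); nra.
Qed.

(** The Gram matrix of [x], [y], [x × y] has determinant [- |x × y| ^ 4]
    but a small upper-left [2 × 2] block. *)
Lemma gram_cross_contra S x y (W sm s : R) :
  S^T = S -> \det S = -1 -> (forall i j, `|S i j| <= sm) ->
  int_col x -> int_col y -> cross x y != 0 -> 1 <= W ->
  (forall i, `|x i 0| <= W) -> (forall i, `|y i 0| <= W) ->
  `|qf S x| <= s -> `|qf S y| <= s -> `|bil S x y| <= s ->
  6 * (s * (36 * W ^+ 4 * sm) ^+ 2) < 1 -> False.
Proof.
move=> hS hdS hSm xi yi c0 hW hx hy qx qy bxy hsmall.
pose B := col3mx x y (cross x y).
pose N := B^T *m S *m B.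
have hB i j : `|B i j| <= 2 * W ^+ 2.
  have W2 : W <= 2 * W ^+ 2 by rewrite expr2; nra.
  rewrite mxE; case: ifP => _; [|case: ifP => _].
  - exact: le_trans (hx i) W2.
  - exact: le_trans (hy i) W2.
  - exact: cross_le.
have hN i j : `|N i j| <= 36 * W ^+ 4 * sm.
  rewrite (_ : 36 * W ^+ 4 * sm = 9 * ((2 * W ^+ 2) ^+ 2 * sm)); last by ring.
  exact: gram_entry_le.
have N00 : N 0 0 = qf S x by rewrite /N gram_mxE col_col3mx0.
have N11 : N 1 1 = qf S y by rewrite /N gram_mxE col_col3mx1.
have N01 : N 0 1 = bil S x y by rewrite /N gram_mxE col_col3mx0 col_col3mx1.
have N10 : N 1 0 = bil S x y by rewrite /N gram_mxE col_col3mx0 col_col3mx1 bil_sym.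
have dN : \det N = - dot (cross x y) (cross x y) ^+ 2.
  by rewrite /N !det_mulmx det_tr hdS det_col3mx triple_cross_self; ring.
have c1 : 1 <= dot (cross x y) (cross x y) by apply: dot_self_ge1 => //; apply: int_cross.
have := det_le_of_small_block hN (s := s) (ltac:(by rewrite N00)) (ltac:(by rewrite N11))
  (ltac:(by rewrite N01)) (ltac:(by rewrite N10)).
rewrite dN normrN ger0_norm ?sqr_ge0 //.
have : 1 <= dot (cross x y) (cross x y) ^+ 2 by rewrite expr2; nra.
lra.
Qed.

End SmallVectors.

Section Approximation.
Variable R : realType.
Implicit Types (S B N : 'M[R]_3) (c p w : 'cV[R]_3).

Lemma int_offdiag_mx c : int_col c -> int_mx (offdiag_mx c).
Proof. by move=> h i j; rewrite mxE; case: ifP => _ //; case: ifP => _ //; case: ifP. Qed.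

Lemma offdiag_mx_le c (s : R) : 0 <= s ->
  (forall i, `|c i 0| <= s) -> forall i j, `|offdiag_mx c i j| <= s.
Proof.
move=> s0 h i j; rewrite mxE; case: ifP => _; first by rewrite normr0.
by case: ifP => _ //; case: ifP.
Qed.

(** [qf (B^T S B) p = D^2 qf S w], whose off-diagonal part is
    [2 * dot (pairprod p) (offdiag (B^T S B))] by [qf_sym_expand]. *)
Lemma pairprod_offdiag_small S B p w (D m eps : R) :
  S^T = S -> B *m p = D *: w -> `|D| <= m -> (forall i, `|p i 0| <= m) ->
  (forall i, `|(B^T *m S *m B) i i| <= eps) -> `|qf S w| <= eps ->
  `|dot (pairprod p) (offdiag (B^T *m S *m B))| <= 2 * (m ^+ 2 * eps).
Proof.
move=> hS hBp hD hp hN hw; set N := B^T *m S *m B in hN *.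
have sq (z : R) : `|z| <= m -> `|z ^+ 2| <= m * m by move=> hz; rewrite expr2 ler_norm_mul.
have e : 2 * dot (pairprod p) (offdiag N) =
    D ^+ 2 * qf S w - (p 0 0 ^+ 2 * N 0 0 + p 1 0 ^+ 2 * N 1 1 + p 2 0 ^+ 2 * N 2 2).
  by rewrite -qfZ -hBp qf_mulmx (qf_sym_expand _ (gram_sym B hS)); ring.
have : `|2 * dot (pairprod p) (offdiag N)|
    <= m * m * eps + (m * m * eps + m * m * eps + m * m * eps).
  by rewrite e; apply: ler_norm_sub; [|apply: ler_norm_add3]; apply: ler_norm_mul; rewrite ?sq.
rewrite normrM normr_nat; lra.
Qed.

Lemma sym_near_offdiag_mx N c (lam d e : R) : N^T = N ->
  (forall i, `|N i i| <= d) -> (forall k, `|offdiag N k 0 - lam * c k 0| <= e) ->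
  0 <= d -> 0 <= e -> forall i j, `|(N - lam *: offdiag_mx c) i j| <= d + e.
Proof.
move=> hN hd he d0 e0 i j.
have f01 : `|N 0 1 - lam * c 0 0| <= e by have := he 0; rewrite mxE.
have f02 : `|N 0 2 - lam * c 1 0| <= e by have := he 1; rewrite mxE.
have f12 : `|N 1 2 - lam * c 2 0| <= e by have := he 2; rewrite mxE.
have f10 : `|N 1 0 - lam * c 0 0| <= e by rewrite (sym_mxE 0 1 hN).
have f20 : `|N 2 0 - lam * c 1 0| <= e by rewrite (sym_mxE 0 2 hN).
have f21 : `|N 2 1 - lam * c 2 0| <= e by rewrite (sym_mxE 1 2 hN).
have le_d x : `|x| <= d -> `|x| <= d + e by lra.
have le_e x : `|x| <= e -> `|x| <= d + e by lra.
rewrite !mxE; case: (ord3P i) => ->; case: (ord3P j) => -> /=; rewrite ?mulr0 ?subr0.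
all: first [by apply: le_d; apply: hd | apply: le_e; assumption].
Qed.

Lemma approx_error_arith (W eps sig : R) :
  1 <= W -> 0 <= eps -> 1 <= sig -> sig <= 7776 * W ^+ 12 ->
  sig * (9 * ((2 * W ^+ 2) ^+ 2 *
    (eps + 4 * (36 * W ^+ 6 * (2 * ((6 * W ^+ 3) ^+ 2 * eps))) / sig)))
  <= 10 ^+ 6 * W ^+ 16 * eps.
Proof.
move=> hW eps0 sig1 sigb.
have sig0 : sig != 0 by rewrite gt_eqF // (lt_le_trans ltr01 sig1).
have W4 : 0 <= W ^+ 4 by rewrite exprn_ge0 // (le_trans ler01 hW).
have -> : sig * (9 * ((2 * W ^+ 2) ^+ 2 *
    (eps + 4 * (36 * W ^+ 6 * (2 * ((6 * W ^+ 3) ^+ 2 * eps))) / sig)))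
  = 36 * (W ^+ 4 * (sig * eps)) + 36 * (288 * 36) * (W ^+ 16 * eps) by field.
have : W ^+ 4 * (sig * eps) <= W ^+ 4 * (7776 * W ^+ 12 * eps).
  by rewrite ler_wpM2l // ler_wpM2r.
rewrite (_ : W ^+ 4 * (7776 * W ^+ 12 * eps) = 7776 * (W ^+ 16 * eps)); last by ring.
rewrite (_ : 10 ^+ 6 * W ^+ 16 * eps = 10 ^+ 6 * (W ^+ 16 * eps)); last by ring.
have : 0 <= W ^+ 16 * eps by rewrite mulr_ge0 // exprn_ge0 // (le_trans ler01 hW).
lra.
Qed.

Lemma gram_offdiag_near_multiple S (W eps : R) w1 w2 w3 w4 w5 :
  S^T = S -> 1 <= W ->
  almost_isotropic S W eps w1 -> almost_isotropic S W eps w2 ->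
  almost_isotropic S W eps w3 -> almost_isotropic S W eps w4 ->
  almost_isotropic S W eps w5 -> triple w1 w2 w3 != 0 ->
  cross (pairprod (adj3 w1 w2 w3 *m w4)) (pairprod (adj3 w1 w2 w3 *m w5)) != 0 ->
  exists c (lam sig : R), [/\ int_col c, 1 <= sig <= 7776 * W ^+ 12,
    forall i, `|c i 0| <= sig &
    forall k, sig * `|offdiag ((col3mx w1 w2 w3)^T *m S *m col3mx w1 w2 w3) k 0
                      - lam * c k 0| <= 4 * (36 * W ^+ 6 * (2 * ((6 * W ^+ 3) ^+ 2 * eps)))].
Proof.
move=> hS hW [i1 b1 q1] [i2 b2 q2] [i3 b3 q3] [i4 b4 q4] [i5 b5 q5] hD.
set A := adj3 w1 w2 w3; set N := _^T *m S *m _.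
have Aw w : (forall i, `|w i 0| <= W) -> forall i, `|(A *m w) i 0| <= 6 * W ^+ 3.
  move=> hw i; rewrite (_ : 6 * W ^+ 3 = 3%:R * (2 * W ^+ 2 * W)); last by ring.
  by apply: mulmx_entry_le (adj3_entry_le b1 b2 b3) _ i 0 => k l; rewrite (ord1 l).
have hNd i : `|N i i| <= eps.
  rewrite /N gram_mxE.
  by case: (ord3P i) => ->; rewrite ?col_col3mx0 ?col_col3mx1 ?col_col3mx2.
have small w : (forall i, `|w i 0| <= W) -> `|qf S w| <= eps ->
    `|dot (pairprod (A *m w)) (offdiag N)| <= 2 * ((6 * W ^+ 3) ^+ 2 * eps).
  move=> hw qw; apply: pairprod_offdiag_small hS _ (triple_le b1 b2 b3) (Aw w hw) hNd qw.
  by rewrite -col3mx_adjK.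
have pp_le w : (forall i, `|w i 0| <= W) -> forall k, `|pairprod (A *m w) k 0| <= 36 * W ^+ 6.
  move=> hw k; rewrite (_ : 36 * W ^+ 6 = 6 * W ^+ 3 * (6 * W ^+ 3)); last by ring.
  by rewrite mxE; case: ifP => _; [|case: ifP => _]; apply: ler_norm_mul; apply: Aw.
have pp_int w : int_col w -> int_col (pairprod (A *m w)).
  move=> /(int_mulmx_col (int_adj3 i1 i2 i3)) h k.
  by rewrite mxE; case: ifP => _; [|case: ifP => _]; apply: rpredM.
set c := cross _ _ => hc.
have C1 : 1 <= dot c c by apply: dot_self_ge1 => //; apply: int_cross; apply: pp_int.
exists c, (dot c (offdiag N) / dot c c), (Num.sqrt (dot c c)); split.
- by apply: int_cross; apply: pp_int.
- have cb : forall i, `|c i 0| <= 2 * (36 * W ^+ 6) ^+ 2.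
    exact: cross_le (pp_le w4 b4) (pp_le w5 b5).
  apply/andP; split; first by rewrite -sqrtr1 ler_wsqrtr.
  apply: le_trans (sqrt_dot_le c) _.
  rewrite (_ : 7776 * W ^+ 12 = 3 * (2 * (36 * W ^+ 6) ^+ 2)); last by ring.
  by have := cb 0; have := cb 1; have := cb 2; lra.
- exact: col_le_sqrt_dot.
- exact: near_cross_multiple C1 (pp_le w4 b4) (pp_le w5 b5) (small w4 b4 q4) (small w5 b5 q5).
Qed.

Lemma integral_approx S (W eps : R) w1 w2 w3 w4 w5 :
  S^T = S -> 1 <= W ->
  almost_isotropic S W eps w1 -> almost_isotropic S W eps w2 ->
  almost_isotropic S W eps w3 -> almost_isotropic S W eps w4 ->
  almost_isotropic S W eps w5 -> triple w1 w2 w3 != 0 ->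
  cross (pairprod (adj3 w1 w2 w3 *m w4)) (pairprod (adj3 w1 w2 w3 *m w5)) != 0 ->
  exists S' mu (sig : R), [/\ S'^T = S', int_mx S', 1 <= sig <= 7776 * W ^+ 12,
     forall i j, `|S' i j| <= 36 * W ^+ 4 * sig &
     forall i j, sig * `|(S - mu *: S') i j| <= 10 ^+ 6 * W ^+ 16 * eps].
Proof.
move=> hS hW s1 s2 s3 s4 s5 hD hc.
have [c [lam [sig [ci /andP[sig1 sigb] cb hx]]]] :=
  gram_offdiag_near_multiple hS hW s1 s2 s3 s4 s5 hD hc.
case: s1 s2 s3 => [i1 b1 q1] [i2 b2 q2] [i3 b3 q3].
have eps0 : 0 <= eps := le_trans (normr_ge0 _) q1.
set D := triple w1 w2 w3 in hD; set A := adj3 w1 w2 w3.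
set N := _^T *m S *m _ in hx.
have Ab := adj3_entry_le b1 b2 b3.
have hNd i : `|N i i| <= eps.
  rewrite /N gram_mxE.
  by case: (ord3P i) => ->; rewrite ?col_col3mx0 ?col_col3mx1 ?col_col3mx2.
set T := 4 * _ in hx.
have sig0 : 0 < sig := lt_le_trans ltr01 sig1.
have hEN : forall i j, `|(N - lam *: offdiag_mx c) i j| <= eps + T / sig.
  apply: sym_near_offdiag_mx; rewrite ?gram_sym //.
  - by move=> k; rewrite ler_pdivlMr // mulrC.
  - by rewrite divr_ge0 ?(ltW sig0) // /T !mulr_ge0 ?exprn_ge0 // (le_trans ler01 hW).
have D2 : D ^+ 2 != 0 by rewrite sqrf_eq0.
exists (A^T *m offdiag_mx c *m A), (lam / D ^+ 2), sig; split.
- by rewrite gram_sym // offdiag_mx_sym.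
- apply: int_mulmx; last exact: int_adj3.
  by apply: int_mulmx; [move=> i j; rewrite mxE; apply: int_adj3 | exact: int_offdiag_mx].
- by rewrite sig1 sigb.
- rewrite (_ : 36 * W ^+ 4 * sig = 9 * ((2 * W ^+ 2) ^+ 2 * sig)); last by ring.
  exact: gram_entry_le Ab (offdiag_mx_le (ltW sig0) cb).
move=> i j.
have -> : (S - lam / D ^+ 2 *: (A^T *m offdiag_mx c *m A)) i j
    = (A^T *m (N - lam *: offdiag_mx c) *m A) i j / D ^+ 2.
  by rewrite mulmxBr mulmxBl adj3_conj -/D -scalemxAr -scalemxAl !mxE; field.
rewrite normrM normfV (ger0_norm (sqr_ge0 D)).
apply: le_trans (approx_error_arith hW eps0 sig1 sigb).
rewrite ler_wpM2l ?(ltW sig0) //; apply: le_trans (gram_entry_le Ab hEN i j).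
rewrite ler_pdivrMr ?lt0r ?D2 ?sqr_ge0 // ler_peMr //.
exact: sqr_intr_ge1 (int_triple i1 i2 i3) hD.
Qed.

End Approximation.

Lemma cube_near (R : realFieldType) (s h : R) :
  `|s ^+ 3 - 1| <= h -> h <= 1 / 2 -> 1 / 2 <= s /\ `|s - 1| <= h.
Proof.
move=> h1 h2.
have s3 : 1 / 2 <= s ^+ 3 by have := ler_norm (1 - s ^+ 3); rewrite distrC; lra.
have sh : 1 / 2 <= s.
  rewrite leNgt; apply/negP => hs.
  have [s0|s0] := leP s 0.
    have : s ^+ 3 <= 0 by rewrite exprS mulr_le0_ge0 ?sqr_ge0.
    lra.
  have : s ^+ 3 < (1 / 2) ^+ 3 by rewrite ltrXn2r ?nnegrE // ltW.
  lra.
split => //.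
have q0 : 0 <= s ^+ 2 + s + 1 by have := sqr_ge0 s; lra.
move: h1; rewrite (_ : s ^+ 3 - 1 = (s - 1) * (s ^+ 2 + s + 1)); last by ring.
rewrite normrM (ger0_norm q0) => hh; apply: le_trans hh; rewrite ler_peMr //.
by have := sqr_ge0 s; lra.
Qed.

Section Diophantine.
Variable R : realType.
Implicit Types (S X : 'M[R]_3).

(** [diophantine_type M S] unfolds to [exists2 c0, 0 < c0 & diophantine_bound M c0 S]. *)
Definition diophantine_bound (M c0 : R) S := forall S' : 'M[R]_3,
  integral_form S' -> S' != 0 -> qdet S' != 0 ->
  qnorm (S - (cbrt (qdet S'))^-1 *: S') > c0 * powR (qnorm S') (- M).

Lemma cbrt_cube (x : R) : cbrt x ^+ 3 = x.
Proof.
have key y : 0 <= y -> powR y (3^-1) ^+ 3 = y.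
  by move=> y0; rewrite -powR_mulrn ?powR_ge0 // -powRrM mulVf ?powRr1.
rewrite /cbrt; case: ifP => h; first exact: key.
by rewrite exprNn key ?oppr_ge0 ?ltW ?ltNge ?h //; ring.
Qed.

Lemma qnorm_le X (m : R) : 0 <= m -> (forall i j, `|X i j| <= m) -> qnorm X <= 2 * m.
Proof.
move=> m0 h; apply: bigmax_le => [|i _]; first by rewrite mulr_ge0.
apply: bigmax_le => [|j _]; first by rewrite mulr_ge0.
rewrite /qcoef; case: eqP => _; first by apply: le_trans (h i i) _; lra.
apply: le_trans (ler_normD _ _) _; have := h i j; have := h j i; lra.
Qed.

Lemma qcoef_le_qnorm X (i j : 'I_3) : (i <= j)%N -> `|qcoef X i j| <= qnorm X.
Proof. by move=> hij; apply: le_trans (le_bigmax _ _ i); exact: (le_bigmax_cond _ _ hij). Qed.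

Lemma qnorm_gt0 X : X^T = X -> X != 0 -> 0 < qnorm X.
Proof.
move=> hX; apply: contraNT; rewrite -leNgt => h0; apply/eqP/matrixP => i j; rewrite mxE.
have zero (a b : 'I_3) : (a <= b)%N -> X a b = 0.
  move=> hab; have := qcoef_le_qnorm X hab; rewrite /qcoef.
  case: eqP => [->|_] h; first by apply/normr0_eq0/le_anti; rewrite normr_ge0 (le_trans h).
  move: h; rewrite (sym_mxE a b hX) -mulr2n normrMn => h.
  apply/normr0_eq0/le_anti; rewrite normr_ge0 andbT.
  by rewrite -(ler_pMn2r (isT : 0 < 2)%N) mul0rn (le_trans h).
case: (leqP i j) => hij; first exact: zero.
by rewrite (sym_mxE j i hX) zero // ltnW.
Qed.

Lemma integral_form_int_mx X : X^T = X -> int_mx X -> integral_form X.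
Proof.
move=> hX hi; split => // i j _; apply/intrP; rewrite /qcoef.
by case: eqP => _; rewrite ?rpredD.
Qed.

Lemma rescale_by_cbrt_det S S' (mu sm del : R) :
  \det S = -1 -> 1 <= sm -> (forall i j, `|S i j| <= sm) -> 0 <= del -> del <= 1 ->
  18 * ((sm + del) ^+ 2 * del) <= 1 / 2 -> (forall i j, `|(S - mu *: S') i j| <= del) ->
  qdet S' != 0 /\
  forall i j, `|(S - (cbrt (qdet S'))^-1 *: S') i j| <= del * (1 + 36 * (sm + 1) ^+ 3).
Proof.
move=> hdS hsm hSb del0 del1 hsmall Eb.
set h := 18 * _ in hsmall.
have muSb i j : `|(mu *: S') i j| <= sm + del.
  rewrite (_ : (mu *: S') i j = S i j - (S - mu *: S') i j); last by rewrite !mxE; ring.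
  exact: ler_norm_sub.
have Sb i j : `|S i j| <= sm + del by rewrite (le_trans (hSb i j)) ?lerDl.
have hdiff i j : `|(mu *: S') i j - S i j| <= del.
  by rewrite distrC (_ : S i j - _ = (S - mu *: S') i j) ?Eb // !mxE.
have hy : `|mu ^+ 3 * qdet S' - 1| <= h.
  rewrite (_ : _ - 1 = - (\det (mu *: S') - \det S)); last by rewrite hdS detZ /qdet; ring.
  by rewrite normrN; apply: det_lipschitz.
have q0 : qdet S' != 0.
  apply: contraTneq hy => ->; rewrite mulr0 sub0r normrN normr1 -ltNge; lra.
split=> // i j.
set t := cbrt (qdet S'); set s := mu * t.
have [s_ge s_near] : 1 / 2 <= s /\ `|s - 1| <= h.
  by apply: cube_near => //; rewrite exprMn cbrt_cube.
have t0 : t != 0 by apply: contra q0 => /eqP t0; rewrite -[qdet S']cbrt_cube -/t t0 expr0n.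
have s0 : 0 < s by apply: lt_le_trans s_ge; rewrite divr_gt0.
have mu0 : mu != 0 by apply: contraTneq s0 => mu0; rewrite /s mu0 mul0r ltxx.
have -> : (S - t^-1 *: S') i j = (S - mu *: S') i j + (s - 1) / s * (mu *: S') i j.
  by rewrite !mxE /s; field; rewrite t0 mu0.
have sinv : `|s|^-1 <= 2.
  by rewrite (ger0_norm (ltW s0)) invf_ple ?posrE //; lra.
have cube : (sm + del) ^+ 3 <= (sm + 1) ^+ 3 by rewrite lerXn2r ?nnegrE; lra.
apply: le_trans (ler_normD _ _) _; rewrite normrM normrM normfV.
have : `|s - 1| * `|s|^-1 * `|(mu *: S') i j| <= h * 2 * (sm + del).
  by rewrite ler_pM ?mulr_ge0 ?invr_ge0 // ler_pM.
have := Eb i j; rewrite /h; nra.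
Qed.

Lemma diophantine_bound_lt S S' (M c0 Z e : R) :
  0 < M -> 0 <= c0 -> diophantine_bound M c0 S -> S'^T = S' -> int_mx S' ->
  qdet S' != 0 -> qnorm S' <= Z -> qnorm (S - (cbrt (qdet S'))^-1 *: S') <= e ->
  c0 < e * powR Z M.
Proof.
move=> M0 c0_0 hD hS' iS' q0 qZ qe.
have S'0 : S' != 0 by apply: contra q0 => /eqP ->; rewrite /qdet det0 oppr0.
have qpos := qnorm_gt0 hS' S'0.
have Z0 : 0 < Z := lt_le_trans qpos qZ.
have pw : (powR Z M)^-1 <= (powR (qnorm S') M)^-1.
  rewrite lef_pV2 ?posrE ?powR_gt0 //.
  by rewrite ge0_ler_powR ?nnegrE ?(ltW M0) ?(ltW qpos) ?(ltW Z0).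
rewrite -ltr_pdivrMr ?powR_gt0 //; apply: le_lt_trans (ler_wpM2l c0_0 pw) _.
by rewrite -powRN; apply: lt_le_trans (hD S' (integral_form_int_mx hS' iS') S'0 q0) qe.
Qed.

Lemma diophantine_contra S S' (M c0 mu sig W eps sm : R) :
  1 < M -> diophantine_bound M c0 S -> \det S = -1 -> 1 <= sm ->
  (forall i j, `|S i j| <= sm) -> 1 <= W -> 0 <= eps ->
  S'^T = S' -> int_mx S' -> 1 <= sig <= 7776 * W ^+ 12 ->
  (forall i j, `|S' i j| <= 36 * W ^+ 4 * sig) ->
  (forall i j, sig * `|(S - mu *: S') i j| <= 10 ^+ 6 * W ^+ 16 * eps) ->
  36 * (sm + 1) ^+ 2 * (10 ^+ 6 * W ^+ 16 * eps) <= 1 ->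
  2 * (1 + 36 * (sm + 1) ^+ 3) * (72 * (10 ^+ 6 * W ^+ 20 * eps)) *
    powR (10 ^+ 6 * W ^+ 16) (M - 1) <= c0 ->
  False.
Proof.
move=> hM hD hdS hsm hSb hW eps0 hS' iS' /andP[sig1 sigb] S'b hE small1 small2.
have W0 : 0 <= W := le_trans ler01 hW.
have sig0 : 0 < sig := lt_le_trans ltr01 sig1.
set d0 := 10 ^+ 6 * W ^+ 16 * eps in hE small1.
have d00 : 0 <= d0 by rewrite /d0 !mulr_ge0 // exprn_ge0.
set del := d0 / sig.
have del0 : 0 <= del by rewrite divr_ge0 // ltW.
have deld0 : del <= d0 by rewrite ler_pdivrMr // ler_peMr.
have Eb i j : `|(S - mu *: S') i j| <= del by rewrite ler_pdivlMr // mulrC.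
have sm2 : 4 <= (sm + 1) ^+ 2 by rewrite expr2; nra.
have del1 : del <= 1 by nra.
have hsmall : 18 * ((sm + del) ^+ 2 * del) <= 1 / 2.
  have : (sm + del) ^+ 2 <= (sm + 1) ^+ 2 by rewrite lerXn2r ?nnegrE; lra.
  have := sqr_ge0 (sm + del); nra.
have [q0 hclose] := rescale_by_cbrt_det hdS hsm hSb del0 del1 hsmall Eb.
set K := 1 + 36 * _ in hclose small2.
have K0 : 0 <= K by rewrite /K addr_ge0 // mulr_ge0 // exprn_ge0 //; lra.
set Z := 2 * (36 * W ^+ 4 * sig).
have qZ : qnorm S' <= Z by apply: qnorm_le => //; rewrite !mulr_ge0 ?exprn_ge0 // ltW.
have M0 : 0 < M := lt_trans ltr01 hM.
have c0_0 : 0 <= c0.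
  by apply: le_trans small2; rewrite !mulr_ge0 ?powR_ge0 ?exprn_ge0 //; lra.
have := diophantine_bound_lt M0 c0_0 hD hS' iS' q0 qZ (qnorm_le (mulr_ge0 del0 K0) hclose).
have Z0 : 0 <= Z by rewrite /Z !mulr_ge0 ?exprn_ge0 // ltW.
rewrite -(mulr_powRB1 Z0 M0); apply/negP; rewrite -leNgt; apply: le_trans small2.
have WZ : Z <= 10 ^+ 6 * W ^+ 16.
  rewrite /Z (_ : W ^+ 16 = W ^+ 4 * W ^+ 12) -?exprD //.
  have : W ^+ 4 * sig <= W ^+ 4 * (7776 * W ^+ 12) by rewrite ler_wpM2l ?exprn_ge0.
  have : 0 <= W ^+ 4 * W ^+ 12 by rewrite mulr_ge0 ?exprn_ge0.
  lra.
have pZ : powR Z (M - 1) <= powR (10 ^+ 6 * W ^+ 16) (M - 1).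
  by rewrite ge0_ler_powR ?nnegrE ?subr_ge0 ?Z0 ?(ltW hM) // (le_trans Z0).
have dZ : del * Z = 72 * (10 ^+ 6 * W ^+ 20 * eps).
  by rewrite /del /Z /d0; field; rewrite gt_eqF.
rewrite (_ : 2 * (del * K) * _ = 2 * K * (del * Z) * powR Z (M - 1)); last by ring.
by rewrite dZ; apply: ler_wpM2l pZ; rewrite !mulr_ge0 ?exprn_ge0.
Qed.

End Diophantine.

Section FiveLines.
Variable R : realType.
Variables (M c0 sm W eps : R) (S : 'M[R]_3).
Hypotheses (hM : 1 < M) (hD : diophantine_bound M c0 S) (hS : S^T = S)
  (hdS : \det S = -1) (hsm : 1 <= sm) (hSm : forall i j, `|S i j| <= sm)
  (hW : 1 <= W) (eps0 : 0 <= eps)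
  (small_gram : 6 * ((216 * W ^+ 8 * eps) * (36 * W ^+ 4 * sm) ^+ 2) < 1)
  (small_det : 36 * (sm + 1) ^+ 2 * (10 ^+ 6 * W ^+ 16 * eps) <= 1)
  (small_dioph : 2 * (1 + 36 * (sm + 1) ^+ 3) * (72 * (10 ^+ 6 * W ^+ 20 * eps))
                   * powR (10 ^+ 6 * W ^+ 16) (M - 1) <= c0).

Local Notation small := (almost_isotropic S W eps).
Implicit Types (w x y z : 'cV[R]_3).

Lemma cubic_le_quartic : 6 * W ^+ 3 <= 12 * W ^+ 4.
Proof.
have W3 : 0 <= W ^+ 3 by rewrite exprn_ge0 // (le_trans ler01 hW).
have : W ^+ 3 <= W ^+ 3 * W by rewrite ler_peMr.
rewrite -exprSr; lra.
Qed.

Lemma coplanar_contra x y w (k a b : R) :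
  small x -> small y -> small w -> cross x y != 0 ->
  a \is a Num.int -> b \is a Num.int -> k != 0 ->
  `|k| <= 12 * W ^+ 4 -> `|a| <= 12 * W ^+ 4 -> `|b| <= 12 * W ^+ 4 ->
  k *: w = a *: x + b *: y -> ~ proportional w x -> ~ proportional w y -> False.
Proof.
move=> [xi hx qx] [yi hy qy] [_ _ qw] cxy ai bi k0 hk ha hb hw nwx nwy.
have a0 : a != 0.
  apply/eqP => a0; apply: nwy; apply: (proportional_scale (a := b) k0).
  by rewrite hw a0 scale0r add0r.
have b0 : b != 0.
  apply/eqP => b0; apply: nwx; apply: (proportional_scale (a := a) k0).
  by rewrite hw b0 scale0r addr0.
have hbil := bil_small_of_comb hS ai bi a0 b0 hk ha hb hw qx qy qw.
have heps : eps <= 216 * W ^+ 8 * eps.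
  by rewrite ler_peMl //; have := exprn_ege1 8 hW; lra.
apply: (gram_cross_contra hS hdS hSm xi yi cxy hW hx hy _ _ _ small_gram).
- exact: le_trans qx heps.
- exact: le_trans qy heps.
- move: hbil; rewrite (_ : 3 * _ = 2 * (216 * W ^+ 8 * eps)); last by ring.
  by rewrite ler_pM2l.
Qed.

Lemma triple_eq0_contra x y z : small x -> small y -> small z -> y != 0 ->
  triple x y z = 0 -> ~ proportional x y -> ~ proportional z x -> ~ proportional z y ->
  False.
Proof.
move=> sx sy sz y0 t0 nxy nzx nzy.
have [xi xb _] := sx; have [yi yb _] := sy; have [zi zb _] := sz.
have cxy : cross x y != 0.
  by apply: contra_not_neq nxy => /cross_eq0_proportional; apply.
have hdot (u v : 'cV[R]_3) : (forall i, `|u i 0| <= W) -> (forall i, `|v i 0| <= W) ->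
    `|dot (cross u v) (cross x y)| <= 12 * W ^+ 4.
  move=> ub vb; rewrite (_ : 12 * _ = 3 * (2 * W ^+ 2 * (2 * W ^+ 2))); last by ring.
  exact: dot_le (cross_le ub vb) (cross_le xb yb).
have rel := dot_cross_expand x y z; rewrite t0 scale0r addr0 in rel.
have k1 : 1 <= dot (cross x y) (cross x y) by apply: dot_self_ge1 => //; apply: int_cross.
apply: (coplanar_contra sx sy sz cxy _ _ _ (hdot _ _ xb yb) (hdot _ _ zb yb)
  (hdot _ _ xb zb) rel nzx nzy).
- by apply: int_dot; apply: int_cross.
- by apply: int_dot; apply: int_cross.
- by rewrite gt_eqF // (lt_le_trans ltr01 k1).
Qed.

Lemma adj3_coord_neq0 x y z w : small x -> small y -> small z -> small w ->
  triple x y z != 0 -> ~ proportional w x -> ~ proportional w y -> ~ proportional w z ->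
  forall i, (adj3 x y z *m w) i 0 != 0.
Proof.
move=> sx sy sz sw t0 nwx nwy nwz.
have [xi xb _] := sx; have [yi yb _] := sy; have [zi zb _] := sz; have [wi wb _] := sw.
have [cxy cxz cyz] := triple_neq0_cross t0.
set A := adj3 x y z.
have rel : triple x y z *: w = (A *m w) 0 0 *: x + (A *m w) 1 0 *: y + (A *m w) 2 0 *: z.
  by rewrite col3mx_adjK mul_col3mx.
have Ai : int_col (A *m w) by apply: int_mulmx_col => //; apply: int_adj3.
have Ab k : `|(A *m w) k 0| <= 12 * W ^+ 4.
  apply: le_trans cubic_le_quartic.
  rewrite (_ : 6 * W ^+ 3 = 3%:R * (2 * W ^+ 2 * W)); last by ring.
  by apply: mulmx_entry_le (adj3_entry_le xb yb zb) _ k 0 => l j; rewrite (ord1 j).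
have tb : `|triple x y z| <= 12 * W ^+ 4 by apply: le_trans cubic_le_quartic; apply: triple_le.
move=> i; apply/eqP => Ai0.
case: (ord3P i) Ai0 => -> Ai0; rewrite Ai0 scale0r ?add0r ?addr0 in rel.
- exact: (coplanar_contra sy sz sw cyz (Ai 1) (Ai 2) t0 tb (Ab 1) (Ab 2) rel nwy nwz).
- exact: (coplanar_contra sx sz sw cxz (Ai 0) (Ai 2) t0 tb (Ab 0) (Ab 2) rel nwx nwz).
- exact: (coplanar_contra sx sy sw cxy (Ai 0) (Ai 1) t0 tb (Ab 0) (Ab 1) rel nwx nwy).
Qed.

Lemma no_five_small_lines (f : nat -> 'cV[R]_3) :
  (forall n, (n < 5)%N -> small (f n)) -> (forall n, (n < 5)%N -> f n != 0) ->
  (forall n m, (n < 5)%N -> (m < 5)%N -> n != m -> ~ proportional (f n) (f m)) ->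
  False.
Proof.
move=> sf nf np.
have [t0|t0] := eqVneq (triple (f 0) (f 1) (f 2)) 0.
  by apply: (triple_eq0_contra (sf 0 isT) (sf 1 isT) (sf 2 isT) (nf 1 isT) t0); apply: np.
set A := adj3 (f 0) (f 1) (f 2).
have nz (n : nat) : (n == 3)%N || (n == 4)%N -> forall i, (A *m f n) i 0 != 0.
  by move=> /orP[] /eqP ->; apply: adj3_coord_neq0 => //; (apply: sf || apply: np).
have hc : cross (pairprod (A *m f 3)) (pairprod (A *m f 4)) != 0.
  apply/eqP => /(pairprod_cross_eq0_proportional (nz 3 isT 0) (nz 3 isT 1) (nz 3 isT 2)
    (nz 4 isT 0) (nz 4 isT 2)).
  case=> t ht; apply: (np 4 3 isT isT isT).
  set D := triple (f 0) (f 1) (f 2) in t0 *.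
  apply: (proportional_scale (k := D) (a := t * D)) => //.
  by rewrite -scalerA !col3mx_adjK -/A ht -scalemxAr.
have [S' [mu [sig [hS' iS' hsig S'b hE]]]] :=
  integral_approx hS hW (sf 0 isT) (sf 1 isT) (sf 2 isT) (sf 3 isT) (sf 4 isT) t0 hc.
exact: (diophantine_contra hM hD hdS hsm hSm hW eps0 hS' iS' hsig S'b hE small_det small_dioph).
Qed.

End FiveLines.

Section CoveringByLines.
Variable F : fieldType.
Variable P : 'cV[F]_3 -> Prop.
Hypothesis P_neq0 : forall v, P v -> v != 0.
Implicit Types (L : seq 'cV[F]_3).

Definition covers_lines L := forall v, P v -> exists2 u, u \in L & proportional v u.

Definition pairwise_nonproportional L := forall n m, (n < size L)%N -> (m < size L)%N ->
  n != m -> ~ proportional (nth 0 L n) (nth 0 L m).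

Lemma greedy_lines k : exists L, [/\ forall u, u \in L -> P u,
  pairwise_nonproportional L, (size L <= k)%N & size L = k \/ covers_lines L].
Proof.
elim: k => [|k [L [LP Lnp Lk Lcov]]]; first by exists [::]; split => //; left.
have [cov|ncov] := pselect (covers_lines L).
  by exists L; split => //; [apply: leqW | right].
case: Lcov => // Lsize.
have [v [Pv nv]] : exists v, P v /\ ~ exists2 u, u \in L & proportional v u.
  apply: contrapT => H; apply: ncov => v Pv; apply: contrapT => H2; apply: H.
  by exists v.
have nvL j : (j < size L)%N -> ~ proportional v (nth 0 L j).
  by move=> hj hp; apply: nv; exists (nth 0 L j) => //; apply: mem_nth.
have np : pairwise_nonproportional (rcons L v).
  move=> n m; rewrite size_rcons !ltnS !nth_rcons => hn hm hnm.
  move: hn hm; rewrite [(n <= _)%N]leq_eqVlt [(m <= _)%N]leq_eqVlt.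
  case/orP=> [/eqP en|ln]; case/orP=> [/eqP em|lm].
  - by move: hnm; rewrite en em eqxx.
  - by rewrite en ltnn eqxx lm; apply: nvL.
  - rewrite em ltnn eqxx ln => -[t ht].
    have t0 : t != 0.
      apply: contraTneq (P_neq0 (LP _ (mem_nth 0 ln))) => t0.
      by rewrite ht t0 scale0r eqxx.
    by apply: (nvL n ln); exists t^-1; rewrite ht scalerA mulVf ?scale1r.
  - by rewrite ln lm; apply: Lnp.
exists (rcons L v); rewrite size_rcons Lsize; split => //; last by left.
by move=> u; rewrite mem_rcons in_cons => /orP[/eqP ->|/LP].
Qed.

Lemma cover_by_lines n :
  (forall f : nat -> 'cV[F]_3, (forall k, (k < n.+1)%N -> P (f k)) ->
    (forall k l, (k < n.+1)%N -> (l < n.+1)%N -> k != l -> ~ proportional (f k) (f l)) ->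
    False) ->
  exists L, [/\ (size L <= n)%N, forall u, u \in L -> u != 0 & covers_lines L].
Proof.
move=> no_more; have [L [LP Lnp Ln Lcov]] := greedy_lines n.+1.
have Lsize : size L != n.+1.
  apply/eqP => Lsize; apply: (no_more (nth 0 L)) => [k hk|k l hk hl].
  - by apply: LP; rewrite mem_nth // Lsize.
  - by apply: Lnp; rewrite Lsize.
exists L; split.
- by rewrite -ltnS ltn_neqAle Lsize.
- by move=> u /LP; apply: P_neq0.
- by case: Lcov => // /eqP; rewrite (negbTE Lsize).
Qed.

End CoveringByLines.

Section Normalization.
Variable R : realType.
Implicit Types (g : 'M[R]_3) (v : 'cV[R]_3).

Lemma vnorm_ge v i : `|v i 0| <= vnorm v.
Proof. exact: (le_bigmax _ (fun i => `|v i 0|) i). Qed.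

Lemma vnorm_gt0 v : 0 < vnorm v -> v != 0.
Proof.
apply: contraTneq => ->; rewrite -leNgt; apply: bigmax_le => // i _.
by rewrite mxE normr0.
Qed.

Lemma S0_sym : (S0 R)^T = S0 R.
Proof. by apply/matrixP => i j; rewrite !mxE; case: (ord3P i) => ->; case: (ord3P j) => ->. Qed.

Lemma det_S0 : \det (S0 R) = -1.
Proof. rewrite det_mx33 !mxE /=; ring. Qed.

Lemma mx_entry_bound (A : 'M[R]_3) : exists2 m : R, 1 <= m & forall i j, `|A i j| <= m.
Proof.
pose mx := \big[Num.max/0]_(i < 3) \big[Num.max/0]_(j < 3) `|A i j|.
have le_mx i j : `|A i j| <= mx.
  exact: le_trans (le_bigmax _ (fun j => `|A i j|) j) (le_bigmax _ _ i).
exists (1 + mx) => [|i j]; first by rewrite lerDl (le_trans _ (le_mx 0 0)).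
by rewrite (le_trans (le_mx i j)) ?lerDr.
Qed.

Lemma powRN_antitone (r x a : R) : 0 < r -> r <= x -> 0 <= a -> powR x (- a) <= powR r (- a).
Proof.
move=> r0 rx a0; have x0 := lt_le_trans r0 rx.
by rewrite !powRN lef_pV2 ?posrE ?powR_gt0 // ge0_ler_powR ?nnegrE ?(ltW r0) ?(ltW x0).
Qed.

Lemma small_of_lattice g (k eta M r : R) v :
  g \in unitmx -> (forall i j, `|invmx g i j| <= k) -> 0 <= eta -> 0 < r -> 0 <= M ->
  in_lattice g v -> in_H eta M v -> r <= vnorm v < r ^+ 2 ->
  almost_isotropic (g^T *m S0 R *m g) (3 * k * r ^+ 2) (eta * powR r (- (50 * M)))
    (invmx g *m v).
Proof.
move=> gu gb eta0 r0 M0 [z ->] hH /andP[rv vr]; split.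
- by move=> i; rewrite mulKmx // mxE; exact: intr_int.
- move=> i; have k0 : 0 <= k := le_trans (normr_ge0 _) (gb 0 0).
  apply: le_trans (mulmx_entry_le gb (b := vnorm (g *m map_mx intr z)) _ i 0) _.
    by move=> l j; rewrite (ord1 j) vnorm_ge.
  by rewrite -mulrA ler_wpM2l ?ler_wpM2l // ltW.
- rewrite -qf_mulmx mulKVmx //; apply: ltW; apply: lt_le_trans hH _.
  by rewrite ler_wpM2l // powRN_antitone // mulr_ge0.
Qed.

End Normalization.

Section Constants.
Variable R : realType.

Lemma rpow_decay1 (r M : R) : 1 <= r -> 1 < M -> r ^+ 32 * powR r (- (50 * M)) <= 1.
Proof.
move=> hr hM; have r0 : 0 <= r by lra.
have rn0 : r != 0 by rewrite gt_eqF //; lra.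
rewrite -powR_mulrn // -powRD; last by apply/implyP.
by apply: le_trans (ler_powR hr (_ : _ <= 0)) _; [lra | rewrite powRr0].
Qed.

Lemma rpow_decay2 (r M : R) : 1 <= r -> 1 < M ->
  r ^+ 40 * powR (r ^+ 32) (M - 1) * powR r (- (50 * M)) <= 1.
Proof.
move=> hr hM; have r0 : 0 <= r by lra.
have rn0 : r != 0 by rewrite gt_eqF //; lra.
rewrite -!powR_mulrn // -powRrM -!powRD; try by apply/implyP.
by apply: le_trans (ler_powR hr (_ : _ <= 0)) _; [lra | rewrite powRr0].
Qed.

Lemma rescaled_decay (k eta r M : R) : 0 <= k -> 0 <= eta -> 1 <= r -> 1 < M ->
  let W := k * r ^+ 2 in let eps := eta * powR r (- (50 * M)) in
  W ^+ 16 * eps <= k ^+ 16 * eta /\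
  W ^+ 20 * eps * powR (10 ^+ 6 * W ^+ 16) (M - 1)
    <= k ^+ 20 * powR (10 ^+ 6 * k ^+ 16) (M - 1) * eta.
Proof.
move=> k0 eta0 hr hM W eps; have r0 : 0 <= r by lra.
split.
  have -> : W ^+ 16 * eps = k ^+ 16 * eta * (r ^+ 32 * powR r (- (50 * M))).
    by rewrite /W /eps; ring.
  by apply: ler_piMr; [rewrite mulr_ge0 ?exprn_ge0 | exact: rpow_decay1].
have -> : W ^+ 20 * eps * powR (10 ^+ 6 * W ^+ 16) (M - 1)
    = k ^+ 20 * powR (10 ^+ 6 * k ^+ 16) (M - 1) * eta
      * (r ^+ 40 * powR (r ^+ 32) (M - 1) * powR r (- (50 * M))).
  rewrite /W (_ : 10 ^+ 6 * _ = 10 ^+ 6 * k ^+ 16 * r ^+ 32); last by ring.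
  have p6 : 0 <= 10 ^+ 6 :> R by rewrite exprn_ge0 ?ler0n.
  rewrite powRM; [| exact: mulr_ge0 p6 (exprn_ge0 _ k0) | exact: exprn_ge0].
  by rewrite /eps; ring.
by apply: ler_piMr; [rewrite !mulr_ge0 ?powR_ge0 ?exprn_ge0 | exact: rpow_decay2].
Qed.

Lemma choose_eta (M sm k c0 : R) : 1 < M -> 1 <= sm -> 1 <= k -> 0 < c0 ->
  exists2 eta : R, 0 < eta < 1 & forall r : R, 1 <= r ->
    let W := k * r ^+ 2 in let eps := eta * powR r (- (50 * M)) in
    [/\ 6 * ((216 * W ^+ 8 * eps) * (36 * W ^+ 4 * sm) ^+ 2) < 1,
        36 * (sm + 1) ^+ 2 * (10 ^+ 6 * W ^+ 16 * eps) <= 1 &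
        2 * (1 + 36 * (sm + 1) ^+ 3) * (72 * (10 ^+ 6 * W ^+ 20 * eps))
          * powR (10 ^+ 6 * W ^+ 16) (M - 1) <= c0].
Proof.
move=> hM hsm hk c0p.
set Kd := 1 + 36 * (sm + 1) ^+ 3.
set Y := k ^+ 20 * powR (10 ^+ 6 * k ^+ 16) (M - 1).
set a := 6 * 216 * 1296 * sm ^+ 2 + 36 * (sm + 1) ^+ 2 * 10 ^+ 6.
set A := k ^+ 16 * a + 144 * 10 ^+ 6 * Kd * Y / c0.
have k16 : 0 <= k ^+ 16 by rewrite exprn_ge0 //; lra.
have Kd0 : 0 <= Kd by rewrite /Kd addr_ge0 // mulr_ge0 // exprn_ge0 //; lra.
have Y0 : 0 <= Y by rewrite /Y mulr_ge0 ?powR_ge0 // exprn_ge0 //; lra.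
have p6 : 0 <= 10 ^+ 6 :> R by rewrite exprn_ge0 ?ler0n.
have a1 : 0 <= 6 * 216 * 1296 * sm ^+ 2 by apply: mulr_ge0 (sqr_ge0 _); lra.
have a2 : 0 <= 36 * (sm + 1) ^+ 2 * 10 ^+ 6.
  by apply: mulr_ge0 p6; apply: mulr_ge0 (sqr_ge0 _); lra.
have A2 : 0 <= 144 * 10 ^+ 6 * Kd * Y / c0.
  apply: divr_ge0 (ltW c0p); apply: mulr_ge0 Y0; apply: mulr_ge0 Kd0.
  by apply: mulr_ge0 p6; lra.
have A0 : 0 <= A by rewrite addr_ge0 // mulr_ge0 // addr_ge0.
pose eta := (2 + A)^-1.
have eta0 : 0 < eta by rewrite invr_gt0; lra.
have small T : 0 <= T -> T <= A -> T * eta < 1.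
  by move=> T0 TA; rewrite ltr_pdivrMr; lra.
exists eta; first by rewrite eta0 /= invf_lt1; lra.
move=> r hr W eps.
have [hX hY] := rescaled_decay (ltW (lt_le_trans ltr01 hk)) (ltW eta0) hr hM.
have := mulr_ge0 k16 a1; have := mulr_ge0 k16 a2 => ka2 ka1.
split.
- rewrite (_ : 6 * _ = 6 * 216 * 1296 * sm ^+ 2 * (W ^+ 16 * eps)); last by ring.
  apply: le_lt_trans (ler_wpM2l a1 hX) _; rewrite mulrA.
  by apply: small; [exact: mulr_ge0 a1 k16 | rewrite /A /a; lra].
- rewrite (_ : 36 * _ * _ = 36 * (sm + 1) ^+ 2 * 10 ^+ 6 * (W ^+ 16 * eps)); last by ring.
  apply: le_trans (ler_wpM2l a2 hX) _; rewrite mulrA; apply: ltW.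
  by apply: small; [exact: mulr_ge0 a2 k16 | rewrite /A /a; lra].
- have hA : 144 * 10 ^+ 6 * Kd * Y / c0 <= A.
    by rewrite /A lerDr; apply: mulr_ge0 k16 (addr_ge0 a1 a2).
  move: (small _ A2 hA).
  rewrite mulrAC ltr_pdivrMr // mul1r => hc0.
  rewrite (_ : 2 * Kd * _ * _ = 144 * 10 ^+ 6 * Kd * (W ^+ 20 * eps
    * powR (10 ^+ 6 * W ^+ 16) (M - 1))); last by ring.
  apply: le_trans (ltW hc0); rewrite -(mulrA _ Y) ler_wpM2l //.
  by apply: mulr_ge0 Kd0; apply: mulr_ge0 p6; lra.
Qed.

End Constants.

Unset Implicit Arguments.

Theorem lemma2p6 (R : realType) (M : R) (g : 'M[R]_3) :
  1 < M -> \det g = 1 ->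
  diophantine_type M (g^T *m S0 R *m g) ->
  exists eta : R, 0 < eta < 1 /\
    forall r : R, 10 < r ->
      exists L : seq 'cV[R]_3,
        (size L <= 12)%N /\ (forall u, u \in L -> u != 0) /\
        forall v : 'cV[R]_3,
          in_lattice g v -> in_H eta M v -> r <= vnorm v < r ^+ 2 ->
          exists2 u, u \in L & exists t : R, v = t *: u.
Proof.
move=> hM hdg [c0 c0p hD].
set S := g^T *m S0 R *m g in hD.
have hS : S^T = S by rewrite gram_sym // S0_sym.
have hdS : \det S = -1 by rewrite !det_mulmx det_tr hdg det_S0; ring.
have gu : g \in unitmx by rewrite unitmxE hdg unitr1.
have [sm hsm hSm] := mx_entry_bound S.
have [k hk hgk] := mx_entry_bound (invmx g).
have hk3 : 1 <= 3 * k by lra.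
have [eta /andP[eta0 eta1] heta] := choose_eta hM hsm hk3 c0p.
exists eta; split => [|r hr]; first by rewrite eta0.
pose P v := [/\ in_lattice g v, in_H eta M v & r <= vnorm v < r ^+ 2].
have P_neq0 v : P v -> v != 0.
  by case=> _ _ /andP[rv _]; apply: vnorm_gt0; apply: lt_le_trans rv; lra.
have [|L [hL hL0 hLcov]] := @cover_by_lines _ P P_neq0 4.
  have r1 : 1 <= r by lra.
  move=> f hf hnp; have [gram det dioph] := heta r r1.
  apply: (no_five_small_lines hM hD hS hdS hsm hSm _ _ gram det dioph
    (f := fun n => invmx g *m f n)) => [||n hn|n hn|n m hn hm hnm [t ht]].
  - by rewrite -[1]mulr1 ler_pM ?exprn_ege1 //; lra.
  - by rewrite mulr_ge0 ?powR_ge0 // ltW.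
  - case: (hf n hn) => hl hH hrv.
    by apply: (small_of_lattice gu hgk (ltW eta0) _ _ hl hH hrv); lra.
  - by apply: contraNneq (P_neq0 _ (hf n hn)) => h; rewrite -[f n](mulKVmx gu) h mulmx0.
  - apply: (hnp n m hn hm hnm); exists t.
    by rewrite -[f n](mulKVmx gu) ht -scalemxAr mulKVmx.
exists L; split; first exact: leq_trans hL _.
by split => // v *; apply: hLcov.
Qed.
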